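(* Let $A\in\mathbb{R}^{n\times n}$, $B\in\mathbb{R}^{n\times m}$, $Q=Q^T\geqslant 0$, $R=R^T>0$, with $(A,B)$ controllable and $(A,\sqrt{Q})$ observable. Let $\widetilde{K}_0\in\mathbb{R}^{m\times n}$ be arbitrary, $c_0=1$, and $b>\rho(A-B\widetilde{K}_0)$. For $i=0,1,2,\ldots$, let $\widetilde{P}_i$ be the solution of $$\frac{\prod_{j=0}^i c_j^2}{b^2}(A-B\widetilde{K}_i)^T\widetilde{P}_i(A-B\widetilde{K}_i)-\widetilde{P}_i+Q+\widetilde{K}_i^TR\widetilde{K}_i=0,$$ let $\widetilde{K}_{i+1}=\big(B^T\widetilde{P}_iB+\frac{b^2}{\prod_{j=0}^i c_j^2}R\big)^{-1}B^T\widetilde{P}_iA$, set $\mathcal{Q}_i=\widetilde{P}_i-Q-\widetilde{K}_{i+1}^TR\widetilde{K}_{i+1}$, and let the scaling factor $c_{i+1}$ satisfy $$c_{i+1}=1\ \text{ if } \mathcal{Q}_i \text{ is non-invertible},\qquad 1<c_{i+1}<\sigma(\widetilde{P}_i\mathcal{Q}_i^{-1})^{1/2}\ \text{ if } \mathcal{Q}_i \text{ is invertible}.$$ Then, for each $i=0,1,2,\ldots$, with the gain $\widetilde{K}_{i+1}$ so obtained, the Lyapunov equation at step $i+1$, $$\frac{\prod_{j=0}^{i+1} c_j^2}{b^2}(A-B\widetilde{K}_{i+1})^T\widetilde{P}_{i+1}(A-B\widetilde{K}_{i+1})-\widetilde{P}_{i+1}+Q+\widetilde{K}_{i+1}^TR\widetilde{K}_{i+1}=0,$$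 has a unique positive definite solution $\widetilde{P}_{i+1}$.
   Context: $\rho(Y)$ is the spectral radius of a square matrix $Y$. $\sigma(Y)$ denotes the minimum singular value of $Y$ and $\sigma(Y)^{1/2}$ its square root. Positive definiteness refers to symmetric matrices. *)

From HB Require Import structures.
From mathcomp Require Import all_boot all_order all_algebra.
From mathcomp Require Import boolp classical_sets reals.
From mathcomp.real_closed Require Import complex.
Set Implicit Arguments. Unset Strict Implicit. Unset Printing Implicit Defensive.
Import Order.TTheory GRing.Theory Num.Theory.
Local Open Scope classical_set_scope.
Local Open Scope ring_scope.

Definition cmod (R : rcfType) (z : R[i]) : R :=
  Num.sqrt (complex.Re z ^+ 2 + complex.Im z ^+ 2).

Definition spectral_radius (R : realType) (n : nat) (Y : 'M[R]_n) : R :=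
  reals.sup [set r : R | exists z : R[i],
     eigenvalue (map_mx (fun x : R => (x%:C)%C) Y) z /\ r = cmod z].

Definition min_singular_value (R : realType) (n : nat) (Y : 'M[R]_n) : R :=
  Num.sqrt (reals.inf [set a : R | eigenvalue (Y^T *m Y) a]).

Definition psd (R : realType) (n : nat) (M : 'M[R]_n) : Prop :=
  M^T = M /\ forall x : 'cV[R]_n, 0 <= (x^T *m M *m x) 0 0.

Definition posdef (R : realType) (n : nat) (M : 'M[R]_n) : Prop :=
  M^T = M /\ forall x : 'cV[R]_n, x != 0 -> 0 < (x^T *m M *m x) 0 0.

Definition controllable (R : realType) (n m : nat)
  (A : 'M[R]_n) (B : 'M[R]_(n, m)) : Prop :=
  \rank (\mxrow_(k < n) (A ^+ k *m B)) = n.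

Definition observable (R : realType) (n p : nat)
  (A : 'M[R]_n) (C : 'M[R]_(p, n)) : Prop :=
  \rank (\mxcol_(k < n) (C *m A ^+ k)) = n.

Definition cprod (R : realType) (c : nat -> R) (i : nat) : R :=
  \prod_(j < i.+1) c j ^+ 2.

Definition lyap_eq (R : realType) (n m : nat) (A : 'M[R]_n) (B : 'M[R]_(n, m))
  (Q : 'M[R]_n) (Rw : 'M[R]_m) (b : R) (c : nat -> R) (i : nat)
  (K : 'M[R]_(m, n)) (P : 'M[R]_n) : Prop :=
  (cprod c i / b ^+ 2) *: ((A - B *m K)^T *m P *m (A - B *m K))
    - P + Q + K^T *m Rw *m K = 0.

Definition next_gain (R : realType) (n m : nat) (A : 'M[R]_n) (B : 'M[R]_(n, m))
  (Rw : 'M[R]_m) (b : R) (c : nat -> R) (i : nat) (P : 'M[R]_n) : 'M[R]_(m, n) :=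
  invmx (B^T *m P *m B + (b ^+ 2 / cprod c i) *: Rw) *m (B^T *m P *m A).

(* With s_j = (prod_(k <= j) c_k^2) / b^2 and G_j = sqrt(s_j) (A - B K_j), the step-j
   equation reads P - G_j^T P G_j = Q + K_j^T R K_j.  Such a Stein equation has a unique
   solution, and it is positive definite, as soon as (G_j, Q + K_j^T R K_j) is observable
   and some P' > 0 has P' - (G_j^N)^T P' G_j^N > 0 for an N > 0: this certificate makes
   the orbits of G_j^N square summable.  For j = 0 take P' = I, because
   rho(G_0) = rho(A - B K_0) / b < 1 makes G_0^N small.  For j + 1 take P' = P_j:
   completing the square around the new gain K_(j+1) turns the step-j equation into
   Qc := P_j - Q - K_(j+1)^T R K_(j+1) = s_j F^T P_j F + D, with F = A - B K_(j+1) and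
   D >= 0, so that P_j - G_(j+1)^T P_j G_(j+1) = P_j - c_(j+1)^2 (Qc - D).  This is
   positive definite when Qc is invertible, by the choice of c_(j+1) below the square root
   of sigma(P_j Qc^-1), and equals the observable cost Q + K_(j+1)^T R K_(j+1) + D when
   c_(j+1) = 1. *)

From HB Require Import structures.
From mathcomp Require Import all_boot all_order all_algebra.
From mathcomp Require Import boolp classical_sets reals topology normedtype derive sequences.
From mathcomp.real_closed Require Import complex.
From mathcomp Require Import ring lra.
Set Implicit Arguments. Unset Strict Implicit. Unset Printing Implicit Defensive.
Import Order.TTheory GRing.Theory Num.Theory.
Import numFieldNormedType.Exports.
Local Open Scope ring_scope.

Section QuadraticForm.
Variable R : comNzRingType.
Implicit Types (n : nat).

Definition qform n (M : 'M[R]_n) (x : 'cV[R]_n) := (x^T *m M *m x) 0 0.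

Lemma qformD n (M N : 'M[R]_n) x : qform (M + N) x = qform M x + qform N x.
Proof. by rewrite /qform mulmxDr mulmxDl mxE. Qed.

Lemma qformB n (M N : 'M[R]_n) x : qform (M - N) x = qform M x - qform N x.
Proof. by rewrite /qform mulmxBr mulmxBl !mxE. Qed.

Lemma qformZ n a (M : 'M[R]_n) x : qform (a *: M) x = a * qform M x.
Proof. by rewrite /qform -scalemxAr -scalemxAl mxE. Qed.

Lemma qform_sum n I (r : seq I) (F : I -> 'M[R]_n) x :
  qform (\sum_(k <- r) F k) x = \sum_(k <- r) qform (F k) x.
Proof. by rewrite /qform mulmx_sumr mulmx_suml summxE. Qed.

Lemma qform_conj p n (G : 'M[R]_(p, n)) (M : 'M[R]_p) x :
  qform (G^T *m M *m G) x = qform M (G *m x).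
Proof. by rewrite /qform trmx_mul !mulmxA. Qed.

Lemma qformv0 n (M : 'M[R]_n) : qform M 0 = 0.
Proof. by rewrite /qform mulmx0 mxE. Qed.

Lemma qformvZ n (M : 'M[R]_n) a x : qform M (a *: x) = a ^+ 2 * qform M x.
Proof.
rewrite /qform; have -> : (a *: x)^T = a *: x^T by apply/matrixP => i j; rewrite !mxE.
by rewrite -!scalemxAl -scalemxAr !mxE mulrA expr2.
Qed.

Lemma bilinearE n (M : 'M[R]_n) (u w : 'cV[R]_n) :
  (u^T *m M *m w) 0 0 = \sum_i \sum_j u i 0 * M i j * w j 0.
Proof.
rewrite mxE exchange_big; apply: eq_bigr => j _.
by rewrite !mxE big_distrl; apply: eq_bigr => i _; rewrite !mxE.
Qed.

Lemma bilinear_tr n (M : 'M[R]_n) (u w : 'cV[R]_n) :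
  (u^T *m M *m w) 0 0 = (w^T *m M^T *m u) 0 0.
Proof.
have tr11 (a : 'M[R]_1) : a 0 0 = a^T 0 0 by rewrite mxE.
by rewrite tr11 !trmx_mul trmxK mulmxA.
Qed.

Lemma qformvD n (M : 'M[R]_n) x y : M^T = M ->
  qform M (x + y) = qform M x + 2 * (y^T *m M *m x) 0 0 + qform M y.
Proof.
move=> MT; rewrite /qform.
have -> : (x + y)^T = x^T + y^T by apply/matrixP => i j; rewrite !mxE.
have addE (a b : 'M[R]_1) : (a + b) 0 0 = a 0 0 + b 0 0 by rewrite mxE.
rewrite !(mulmxDl, mulmxDr) !addE.
by rewrite [(x^T *m M *m y) 0 0]bilinear_tr MT; ring.
Qed.

End QuadraticForm.

Section SquaredNorm.
Variable R : realDomainType.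
Implicit Types (n : nat).

Definition sqnorm n (x : 'cV[R]_n) := qform 1%:M x.

Lemma sqnormE n (x : 'cV[R]_n) : sqnorm x = \sum_i x i 0 ^+ 2.
Proof. by rewrite /sqnorm /qform mulmx1 mxE; apply: eq_bigr => i _; rewrite !mxE expr2. Qed.

Lemma sqnorm_ge0 n (x : 'cV[R]_n) : 0 <= sqnorm x.
Proof. by rewrite sqnormE sumr_ge0 // => i _; rewrite sqr_ge0. Qed.

Lemma sqnorm_eq0 n (x : 'cV[R]_n) : (sqnorm x == 0) = (x == 0).
Proof.
apply/idP/eqP => [|->]; last by rewrite sqnormE big1 // => i _; rewrite mxE expr0n.
rewrite sqnormE psumr_eq0 => [/allP x0|i _]; last exact: sqr_ge0.
apply/matrixP => i j; rewrite (ord1 j) mxE; apply/eqP.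
by rewrite -sqrf_eq0; apply: x0; rewrite mem_index_enum.
Qed.

Lemma sqnorm_gt0 n (x : 'cV[R]_n) : x != 0 -> 0 < sqnorm x.
Proof. by rewrite lt_def sqnorm_ge0 sqnorm_eq0 andbT. Qed.

Definition l1norm p q (M : 'M[R]_(p, q)) := \sum_i \sum_j `|M i j|.

Lemma l1norm_ge0 p q (M : 'M[R]_(p, q)) : 0 <= l1norm M.
Proof. by apply: sumr_ge0 => i _; apply: sumr_ge0. Qed.

Lemma bilinear_le n (M : 'M[R]_n) (u w : 'cV[R]_n) :
  `|(u^T *m M *m w) 0 0| <= l1norm M * (sqnorm u + sqnorm w).
Proof.
have entry_le (x : 'cV[R]_n) i : `|x i 0| ^+ 2 <= sqnorm x.
  rewrite real_normK ?num_real // sqnormE (bigD1 i) //= lerDl.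
  by rewrite sumr_ge0 // => j _; rewrite sqr_ge0.
rewrite bilinearE /l1norm mulr_suml (le_trans (ler_norm_sum _ _ _)) // ler_sum // => i _.
rewrite mulr_suml (le_trans (ler_norm_sum _ _ _)) // ler_sum // => j _.
rewrite !normrM mulrAC mulrC ler_wpM2l //.
move: (entry_le u i) (entry_le w j) (normr_ge0 (u i 0)) (normr_ge0 (w j 0)).
by nra.
Qed.

End SquaredNorm.

Section Positivity.
Variable R : realType.
Implicit Types (n : nat).

Lemma posdef_psd n (M : 'M[R]_n) : posdef M -> psd M.
Proof.
move=> [MT Mp]; split=> // x.
by have [->|/Mp/ltW//] := eqVneq x 0; rewrite mulmx0 mxE.
Qed.

Lemma psd0 n : psd (0 : 'M[R]_n).
Proof. by split=> [|x]; rewrite ?trmx0 // mulmx0 mul0mx mxE. Qed.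

Lemma posdef1 n : posdef (1%:M : 'M[R]_n).
Proof. by split=> [|x x0]; [rewrite trmx1 | exact: sqnorm_gt0]. Qed.

Lemma psdD n (M N : 'M[R]_n) : psd M -> psd N -> psd (M + N).
Proof.
move=> [MT Mp] [NT Np]; split=> [|x]; first by rewrite linearD /= MT NT.
by rewrite -/(qform _ x) qformD; apply: addr_ge0; [apply: Mp | apply: Np].
Qed.

Lemma psdZ n a (M : 'M[R]_n) : 0 <= a -> psd M -> psd (a *: M).
Proof.
move=> a0 [MT Mp]; split=> [|x]; first by rewrite linearZ /= MT.
rewrite -/(qform _ x) qformZ; exact: mulr_ge0 a0 (Mp x).
Qed.

Lemma psd_conj p n (G : 'M[R]_(p, n)) (M : 'M[R]_p) : psd M -> psd (G^T *m M *m G).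
Proof.
move=> [MT Mp]; split=> [|x]; first by rewrite !trmx_mul trmxK MT mulmxA.
by rewrite -/(qform _ x) qform_conj; apply: Mp.
Qed.

Lemma psd_gram p n (C : 'M[R]_(p, n)) : psd (C^T *m C).
Proof.
split=> [|x]; first by rewrite trmx_mul trmxK.
by rewrite -/(qform _ x) -(mulmx1 C^T) qform_conj sqnorm_ge0.
Qed.

Lemma posdefDl n (M N : 'M[R]_n) : psd M -> posdef N -> posdef (M + N).
Proof.
move=> [MT Mp] [NT Np]; split=> [|x x0]; first by rewrite linearD /= MT NT.
rewrite -/(qform _ x) qformD; exact: ltr_wpDl (Mp x) (Np x x0).
Qed.

Lemma posdefZ n a (M : 'M[R]_n) : 0 < a -> posdef M -> posdef (a *: M).
Proof.
move=> a0 [MT Mp]; split=> [|x x0]; first by rewrite linearZ /= MT.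
rewrite -/(qform _ x) qformZ; exact: mulr_gt0 a0 (Mp x x0).
Qed.

Lemma posdef_mx0 (M : 'M[R]_0) : posdef M.
Proof. by split=> [|x]; [apply/matrixP => -[] | rewrite [x]flatmx0 eqxx]. Qed.

Lemma posdef_qform_eq0 n (M : 'M[R]_n) x : posdef M -> qform M x = 0 -> x = 0.
Proof.
by move=> [_ Mp] Mx0; apply/eqP; apply: contraT => /Mp; rewrite -/(qform _ _) Mx0 ltxx.
Qed.

Lemma psd_qform_eq0 n (M : 'M[R]_n) x : psd M -> qform M x = 0 -> M *m x = 0.
Proof.
move=> [MT Mp] Mx0; apply/eqP; rewrite -sqnorm_eq0; set v := M *m x.
(* t |-> qform M (x - t M x) is a nonnegative quadratic without constant term, so its
   linear coefficient -2 |M x|^2 vanishes. *)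
have cross t : ((t *: v)^T *m M *m x) 0 0 = t * sqnorm v.
  by rewrite linearZ /= -!scalemxAl mxE /sqnorm /qform mulmx1 -mulmxA.
have := Mp (x + (- (sqnorm v / (qform M v + 1))) *: v).
rewrite -/(qform _ _) qformvD // Mx0 qformvZ cross add0r sqrrN.
move: (sqnorm_ge0 v) (Mp v); rewrite -/(qform M v).
move: (sqnorm v) (qform M v) => a b a0 b0; set t := a / (b + 1).
have tb : a = t * (b + 1) by rewrite /t divfK // gt_eqF // ltr_wpDl.
have t0 : 0 <= t by rewrite divr_ge0 // addr_ge0.
clearbody t; subst a => h.
have -> : t = 0 by nra.
by rewrite mul0r.
Qed.

Lemma sym_unitmx n (M : 'M[R]_n) :
  M^T = M -> (forall x : 'cV_n, M *m x = 0 -> x = 0) -> M \in unitmx.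
Proof.
move=> MT inj; rewrite -row_free_unit -kermx_eq0.
apply/eqP/row_matrixP => i; rewrite row0; apply: trmx_inj; rewrite trmx0.
by apply: inj; rewrite -{1}MT -trmx_mul -row_mul mulmx_ker row0 trmx0.
Qed.

Lemma posdef_unitmx n (M : 'M[R]_n) : posdef M -> M \in unitmx.
Proof.
move=> [MT Mp]; apply: sym_unitmx => // x Mx0; apply/eqP; apply: contraT => /Mp.
by rewrite -mulmxA Mx0 mulmx0 mxE ltxx.
Qed.

Lemma psd_unitmx_posdef n (M : 'M[R]_n) : psd M -> M \in unitmx -> posdef M.
Proof.
move=> Mpsd Mu; split=> [|x x0]; first exact: Mpsd.1.
rewrite lt_def Mpsd.2 andbT; apply: contra x0 => /eqP /(psd_qform_eq0 Mpsd) Mx0.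
by rewrite -(mulKmx Mu x) Mx0 mulmx0.
Qed.

End Positivity.

Section RayleighQuotient.
Variable R : realType.
Local Open Scope classical_set_scope.

Lemma sum_continuous (T : topologicalType) (I : finType) (F : I -> T -> R) :
  (forall i, continuous (F i)) -> continuous (fun x => \sum_i F i x).
Proof.
by move=> Fc; apply: (@continuous_big R I +%R 0 xpredT add_continuous T _ F) => i _.
Qed.

Lemma qform_row_continuous n (M : 'M[R]_n) :
  continuous (fun v : 'rV[R]_n => (v *m M *m v^T) 0 0).
Proof.
rewrite (_ : (fun v : 'rV[R]_n => _) =
    fun v => \sum_j (\sum_i v 0 i * M i j) * v 0 j); last first.
  by apply: funext => v; rewrite mxE; under eq_bigr do rewrite !mxE.
apply: sum_continuous => j v; apply: continuousM; last exact: coord_continuous.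
move: v; apply: sum_continuous => i v.
by apply: continuousM; [exact: coord_continuous | exact: cst_continuous].
Qed.

Lemma rayleigh_min n (S T : 'M[R]_n.+1) : posdef T ->
  exists2 x, x != 0 & forall y, qform S x * qform T y <= qform S y * qform T x.
Proof.
move=> [_ Tp].
(* The library's Heine-Borel theorem is stated for row vectors. *)
pose A := [set v : 'rV[R]_n.+1 | `|v| = 1].
pose f (v : 'rV[R]_n.+1) := (v *m S *m v^T) 0 0 / (v *m T *m v^T) 0 0.
have fE v : f v = qform S v^T / qform T v^T by rewrite /f /qform trmxK.
have A_neq0 v : A v -> v^T != 0.
  rewrite /A /= trmx_eq0 => v1; apply/eqP => v0.
  by move: v1; rewrite v0 normr0 => /esym/eqP; rewrite oner_eq0.
have normalize (v : 'rV[R]_n.+1) : v != 0 -> A (`|v|^-1 *: v).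
  by move=> v0; rewrite /A /= normrZ ger0_norm ?invr_ge0 // mulVf ?normr_eq0.
have f_continuous (v : 'rV[R]_n.+1) : A v -> {for v, continuous f}.
  move=> /A_neq0 /Tp; rewrite trmxK => Tv.
  apply: continuousM; first exact: qform_row_continuous.
  by apply: continuousV; [rewrite lt0r_neq0 | exact: qform_row_continuous].
have [x xA xmin] : exists2 x, x \in A & forall t, t \in A -> f x <= f t.
  apply: compact_EVT_min.
  - exists (`|const_mx 1 : 'rV[R]_n.+1|^-1 *: const_mx 1); apply: normalize.
    by apply/eqP => /matrixP /(_ 0 0) /eqP; rewrite !mxE oner_eq0.
  - apply: bounded_closed_compact; first by exists 1; split=> // M M1 v /= ->; exact: ltW.
    apply: (@preimage_closed _ _ (fun v : 'rV[R]_n.+1 => `|v|) [set 1]).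
      by move=> v _; apply: norm_continuous.
    exact: closed_eq.
  - by apply: continuous_in_subspaceT => v /set_mem /f_continuous.
have x0 := A_neq0 x (set_mem xA); exists x^T => // y.
have [->|y0] := eqVneq y 0; first by rewrite !qformv0 mulr0 mul0r.
have Ty := Tp y y0; have Tx := Tp _ x0.
have yT0 : y^T != 0 by rewrite trmx_eq0.
have := xmin _ (mem_set (normalize _ yT0)).
rewrite !fE linearZ /= !qformvZ mulrAC invfM mulrA.
rewrite mulfV ?expf_neq0 ?invr_eq0 ?normr_eq0 ?trmx_eq0 //.
rewrite !trmxK mul1r => h.
by rewrite -ler_pdivlMr // mulrAC -ler_pdivrMr // [qform S y / _]mulrC.
Qed.

Lemma posdef_coercive n (U : 'M[R]_n) : posdef U ->
  exists2 C, 0 < C & forall y, sqnorm y <= C * qform U y.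
Proof.
case: n U => [|n] U Upd; first by exists 1 => // y; rewrite [y]flatmx0 /sqnorm !qformv0 mulr0.
have [x x0 xmin] := rayleigh_min U (posdef1 R n.+1).
have Ux := Upd.2 x x0; exists (sqnorm x / qform U x) => [|y].
  by rewrite divr_gt0 // sqnorm_gt0.
by rewrite mulrAC ler_pdivlMr // mulrC [sqnorm x * _]mulrC; apply: xmin.
Qed.

Lemma rayleigh_eigenvector n (S T : 'M[R]_n.+1) : S^T = S -> posdef T ->
  exists2 x : 'cV_n.+1, x != 0 &
    exists mu, S *m x = mu *: (T *m x) /\ forall y, mu * qform T y <= qform S y.
Proof.
move=> ST Tpd; have [x x0 xmin] := rayleigh_min S Tpd.
have Tx := Tpd.2 x x0; set mu := qform S x / qform T x.
have mu_min y : mu * qform T y <= qform S y by rewrite mulrAC ler_pdivrMr.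
exists x => //; exists mu; split => //.
have psd_gap : psd (S - mu *: T).
  split=> [|y]; first by rewrite linearB linearZ /= ST Tpd.1.
  by rewrite -/(qform _ y) qformB qformZ subr_ge0.
apply/eqP; rewrite -subr_eq0 scalemxAl -mulmxBl; apply/eqP.
by apply: psd_qform_eq0 psd_gap _; rewrite qformB qformZ divfK ?subrr // gt_eqF.
Qed.

End RayleighQuotient.

Lemma linear_inj_surj (K : fieldType) (vT : vectType K) (f : {linear vT -> vT}) :
  injective f -> forall w, exists v, f v = w.
Proof.
move=> finj w; have ker0 : lker (linfun f) == 0%VS.
  by apply/lker0P => u v; rewrite !lfunE; apply: finj.
by exists ((linfun f)^-1%VF w); rewrite -[f _](lfunE f) lker0_lfunVK.
Qed.

Lemma le0_of_bounded_sums (R : realType) (a K : R) (u : nat -> R) :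
  (forall k, a <= u k) -> (forall N, \sum_(k < N) u k <= K) -> a <= 0.
Proof.
move=> au uK; rewrite leNgt; apply/negP => a0.
have K0 : 0 <= K by apply: le_trans (uK 0%N); rewrite big_ord0.
have := archi_boundP (divr_ge0 K0 (ltW a0)); set N := Num.Def.archi_bound _.
rewrite ltr_pdivrMr // ltNge => /negP; apply; apply: le_trans (uK N).
have -> : N%:R * a = \sum_(k < N) a by rewrite sumr_const card_ord mulr_natl.
by apply: ler_sum => k _.
Qed.

Section SteinOperator.
Variables (R : realType) (n : nat).
Implicit Types (G H P W X : 'M[R]_n) (x : 'cV[R]_n).

Definition stein G X := X - G^T *m X *m G.

Fact stein_is_linear G : linear (stein G).
Proof.
move=> a X Y; rewrite /stein mulmxDr mulmxDl -scalemxAr -scalemxAl.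
by rewrite scalerBr opprD addrACA.
Qed.

HB.instance Definition _ G :=
  GRing.isLinear.Build R 'M[R]_n 'M[R]_n _ (stein G) (stein_is_linear G).

Definition stein_cert P H := posdef P /\ posdef (stein H P).

(* Observability of (G, W^(1/2)), stated without the square root. *)
Definition qform_observable G W :=
  forall x, (forall k, (k < n)%N -> qform W (G ^+ k *m x) = 0) -> x = 0.

Lemma stein_cert_l1norm H : l1norm H < 1 / 2 -> stein_cert 1%:M H.
Proof.
move=> H_small; split; first exact: posdef1.
split=> [|x x0]; first by rewrite /stein linearB /= !trmx_mul trmxK trmx1 mulmxA.
rewrite -/(qform _ x) qformB qform_conj -/(sqnorm x) -/(sqnorm (H *m x)).
have := bilinear_le H (H *m x) x.
have -> : ((H *m x)^T *m H *m x) 0 0 = sqnorm (H *m x) by rewrite /sqnorm /qform mulmx1 mulmxA.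
move=> /(le_trans (ler_norm _)); move: (sqnorm_gt0 x0) (sqnorm_ge0 (H *m x)).
by move: (l1norm_ge0 H); nra.
Qed.

Lemma stein_telescope G X N :
  X - (G ^+ N)^T *m X *m G ^+ N = \sum_(k < N) (G ^+ k)^T *m stein G X *m G ^+ k.
Proof.
elim: N => [|N IH]; first by rewrite big_ord0 expr0 trmx1 mul1mx mulmx1 subrr.
rewrite big_ord_recr /= -IH exprS -mulmxE trmx_mul /stein.
by rewrite mulmxBr mulmxBl !mulmxA addrA subrK.
Qed.

Lemma qform_stein_telescope G X N x :
  qform X x - qform X (G ^+ N *m x) = \sum_(k < N) qform (stein G X) (G ^+ k *m x).
Proof.
rewrite -qform_conj -qformB stein_telescope qform_sum.
by apply: eq_bigr => k _; rewrite qform_conj.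
Qed.

Lemma stein_cert_orbit P H : stein_cert P H ->
  exists2 C, 0 <= C & forall x N, \sum_(k < N) sqnorm (H ^+ k *m x) <= C * qform P x.
Proof.
move=> [Ppd Upd]; have [C C0 HC] := posdef_coercive Upd.
exists C => [|x N]; first exact: ltW.
apply: le_trans (_ : C * \sum_(k < N) qform (stein H P) (H ^+ k *m x) <= _).
  by rewrite mulr_sumr ler_sum.
rewrite -qform_stein_telescope ler_wpM2l ?(ltW C0) // lerBlDr lerDl.
exact: (posdef_psd Ppd).2.
Qed.

Lemma stein_cert_inj G P N X : stein_cert P (G ^+ N) -> stein G X = 0 -> X = 0.
Proof.
move=> cert X0; have [C C0 HC] := stein_cert_orbit cert.
have X_pow k : X = ((G ^+ N) ^+ k)^T *m X *m (G ^+ N) ^+ k.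
  apply/eqP; rewrite -subr_eq0 -exprM stein_telescope big1 // => j _.
  by rewrite X0 mulmx0 mul0mx.
apply/matrixP => i j; rewrite mxE; apply/eqP; rewrite -normr_le0.
pose e (l : 'I_n) : 'cV[R]_n := delta_mx l 0.
have Xij : X i j = ((e i)^T *m X *m e j) 0 0 by rewrite trmx_delta -rowE -colE !mxE.
apply: (@le0_of_bounded_sums R `|X i j| (l1norm X * (C * qform P (e i) + C * qform P (e j)))
  (fun k => l1norm X * (sqnorm ((G ^+ N) ^+ k *m e i) + sqnorm ((G ^+ N) ^+ k *m e j)))).
  move=> k; rewrite Xij {1}(X_pow k); set H := (G ^+ N) ^+ k.
  have -> : ((e i)^T *m (H^T *m X *m H) *m e j) 0 0 =
      ((H *m e i)^T *m X *m (H *m e j)) 0 0 by rewrite trmx_mul !mulmxA.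
  exact: bilinear_le.
move=> M; rewrite -mulr_sumr ler_wpM2l ?l1norm_ge0 // big_split /=.
by apply: lerD; apply: HC.
Qed.

Lemma stein_tr G X : stein G X^T = (stein G X)^T.
Proof. by rewrite /stein linearB /= !trmx_mul trmxK mulmxA. Qed.

Lemma stein_cert_posdef G P N W X : (0 < N)%N -> stein_cert P (G ^+ N) -> psd W ->
  qform_observable G W -> stein G X = W -> posdef X.
Proof.
move=> N0 cert [WT Wge] obs XW.
have XT : X^T = X.
  apply/esym/eqP; rewrite -subr_eq0; apply/eqP; apply: stein_cert_inj cert _.
  by rewrite linearB /= stein_tr XW WT subrr.
split=> // x x0; rewrite ltNge; apply/negP => Xx.
have : ~ forall k, (k < n)%N -> qform W (G ^+ k *m x) = 0.
  by move=> /obs /eqP; rewrite (negbTE x0).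
case/existsNP => k0 /not_implyP [_ /eqP Wk0].
set a := qform W (G ^+ k0 *m x).
have a0 : 0 < a by rewrite lt_def Wk0; apply: Wge.
have [C C0 HC] := stein_cert_orbit cert.
(* Telescoping gives qform X (H^j y) <= qform X x - a <= - a for every j, which
   contradicts the square summability of the orbit of y. *)
set H := G ^+ N; set y := H ^+ k0.+1 *m x.
suff : a <= 0 by rewrite leNgt a0.
apply: (@le0_of_bounded_sums R a (l1norm X * (2 * (C * qform P y)))
  (fun j => l1norm X * (2 * sqnorm (H ^+ j *m y)))) => [j|M]; last first.
  by rewrite -mulr_sumr ler_wpM2l ?l1norm_ge0 // -mulr_sumr ler_wpM2l.
have k0N : (k0 < N * (j + k0.+1))%N by apply: leq_trans (leq_pmull _ N0); rewrite ltn_addl.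
have a_le : a <= qform X x - qform X (H ^+ j *m y).
  rewrite /y mulmxA mulmxE -exprD -exprM qform_stein_telescope XW (bigD1 (Ordinal k0N)) //=.
  by rewrite lerDl sumr_ge0 // => k _; apply: Wge.
have := bilinear_le X (H ^+ j *m y) (H ^+ j *m y); rewrite -/(qform _ _) => bnd.
have := ler_norm (- qform X (H ^+ j *m y)); rewrite normrN.
by move: Xx; rewrite -/(qform X x); lra.
Qed.

Lemma stein_cert_solution G P N W : (0 < N)%N -> stein_cert P (G ^+ N) -> psd W ->
  qform_observable G W ->
  exists X, [/\ posdef X, stein G X = W & forall Y, stein G Y = W -> Y = X].
Proof.
move=> N0 cert Wpsd obs.
have inj : injective (stein G).
  move=> X Y eXY; apply/eqP; rewrite -subr_eq0; apply/eqP.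
  by apply: stein_cert_inj cert _; rewrite linearB /= eXY subrr.
have [X XW] := linear_inj_surj inj W.
exists X; split=> [|//|Y YW]; first exact: stein_cert_posdef N0 cert Wpsd obs XW.
by apply: inj; rewrite XW.
Qed.

Lemma gramian_posdef G W N : (n <= N)%N -> psd W -> qform_observable G W ->
  posdef (\sum_(k < N) (G ^+ k)^T *m W *m G ^+ k).
Proof.
move=> nN Wpsd obs; split=> [|x x0].
  by rewrite raddf_sum /=; apply: eq_bigr => k _; rewrite !trmx_mul trmxK Wpsd.1 mulmxA.
have ge0 k : 0 <= qform ((G ^+ k)^T *m W *m G ^+ k) x by rewrite qform_conj; apply: Wpsd.2.
rewrite -/(qform _ x) qform_sum lt_def sumr_ge0 // andbT.
apply: contra x0 => /eqP /(psumr_eq0P (fun (k : 'I_N) _ => ge0 k)) sum0.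
apply/eqP/obs => k kn; rewrite -qform_conj.
exact: (sum0 (Ordinal (leq_trans kn nN))).
Qed.

Lemma stein_cert_observable G P : posdef P -> psd (stein G P) ->
  qform_observable G (stein G P) -> stein_cert P (G ^+ n.+1).
Proof.
move=> Ppd Wpsd obs; split=> //.
by rewrite /stein stein_telescope; apply: gramian_posdef (leqnSn n) Wpsd obs.
Qed.

Lemma posdef_qform_observable G W : posdef W -> qform_observable G W.
Proof.
move=> Wpd x Wx; have [n0|n_gt0] := posnP n.
  by apply/matrixP => -[i Hi]; have Hi' := Hi; rewrite n0 in Hi'.
by apply: posdef_qform_eq0 Wpd _; have := Wx 0%N n_gt0; rewrite expr0 mul1mx.
Qed.

End SteinOperator.

Lemma completing_square (R : comNzRingType) n m (A : 'M[R]_n) (B : 'M[R]_(n, m))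
    (P : 'M[R]_n) (Rw : 'M[R]_m) (s : R) (K L : 'M[R]_(m, n)) :
  P^T = P -> Rw^T = Rw -> (s *: (B^T *m P *m B) + Rw) *m K = s *: (B^T *m P *m A) ->
  s *: ((A - B *m L)^T *m P *m (A - B *m L)) + L^T *m Rw *m L =
  s *: ((A - B *m K)^T *m P *m (A - B *m K)) + K^T *m Rw *m K
    + (L - K)^T *m (s *: (B^T *m P *m B) + Rw) *m (L - K).
Proof.
move=> PT RT; set M := s *: (B^T *m P *m B) + Rw => MK.
have MT : M^T = M by rewrite linearD linearZ /= !trmx_mul trmxK PT RT mulmxA.
have KM : K^T *m M = s *: (A^T *m P *m B).
  by rewrite -MT -trmx_mul MK linearZ /= !trmx_mul trmxK PT mulmxA.
have expand X : s *: ((A - B *m X)^T *m P *m (A - B *m X)) + X^T *m Rw *m X =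
    s *: (A^T *m P *m A) - K^T *m M *m X - X^T *m M *m K + X^T *m M *m X.
  have trB : (A - B *m X)^T = A^T - X^T *m B^T by rewrite linearB /= trmx_mul.
  rewrite KM -(mulmxA X^T M K) MK /M trB.
  rewrite !(mulmxBl, mulmxBr, mulmxDl, mulmxDr, mulNmx, mulmxN).
  rewrite -!(scalemxAl, scalemxAr) !mulmxA.
  by apply/matrixP => i j; rewrite !mxE; ring.
have trB : (L - K)^T = L^T - K^T by rewrite linearB.
rewrite !expand trB !(mulmxBl, mulmxBr).
by apply/matrixP => i j; rewrite !mxE; ring.
Qed.

Section LinearQuadratic.
Variable R : realType.

Lemma observable_closed_loop n m p (A : 'M[R]_n) (B : 'M[R]_(n, m))
    (C : 'M[R]_(p, n)) (K : 'M[R]_(m, n)) (a : R) (x : 'cV[R]_n) :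
  a != 0 -> observable A C ->
  (forall k, (k < n)%N -> C *m ((a *: (A - B *m K)) ^+ k *m x) = 0) ->
  (forall k, (k < n)%N -> K *m ((a *: (A - B *m K)) ^+ k *m x) = 0) -> x = 0.
Proof.
move=> a0 obs Cx Kx; set G := a *: (A - B *m K) in Cx Kx.
have scaled_eq0 k (M : 'M[R]_(_, n)) :
    M *m (a ^+ k *: (A ^+ k *m x)) = 0 -> M *m (A ^+ k *m x) = 0.
  by rewrite -scalemxAr => /eqP; rewrite scaler_eq0 expf_eq0 (negbTE a0) andbF => /eqP.
have Gx k : (k <= n)%N -> G ^+ k *m x = a ^+ k *: (A ^+ k *m x).
  elim: k => [|k IH] kn; first by rewrite !expr0 mul1mx scale1r.
  have {}IH := IH (ltnW kn).
  have KAx : K *m (A ^+ k *m x) = 0 by apply: scaled_eq0; rewrite -IH Kx.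
  have powS (M : 'M[R]_n) : M ^+ k.+1 = M *m M ^+ k by rewrite exprS mulmxE.
  rewrite powS -mulmxA IH /G -scalemxAl -scalemxAr mulmxBl -mulmxA KAx.
  by rewrite mulmx0 subr0 scalerA -exprS mulmxA -powS.
have Ox : (\mxcol_(k < n) (C *m A ^+ k)) *m x = 0.
  rewrite mxcol_mul (eq_mxcol (B_ := fun=> (0 : 'M[R]_(p, 1)))) ?mxcol0 // => k.
  by rewrite -mulmxA; apply: scaled_eq0; rewrite -Gx ?Cx // ltnW.
have free : row_free (\mxcol_(k < n) (C *m A ^+ k))^T by rewrite -row_leq_rank mxrank_tr obs.
apply: trmx_inj; apply/eqP.
by rewrite trmx0 -(mulmx_free_eq0 _ free) -trmx_mul Ox trmx0.
Qed.

Lemma closed_loop_qform_observable n m p (A : 'M[R]_n) (B : 'M[R]_(n, m))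
    (C : 'M[R]_(p, n)) (K : 'M[R]_(m, n)) (Rw : 'M[R]_m) (D : 'M[R]_n) (a : R) :
  a != 0 -> observable A C -> posdef Rw -> psd D ->
  qform_observable (a *: (A - B *m K)) (C^T *m C + K^T *m Rw *m K + D).
Proof.
move=> a0 obs Rpd Dpsd x W0.
have W_eq0 y : qform (C^T *m C + K^T *m Rw *m K + D) y = 0 -> C *m y = 0 /\ K *m y = 0.
  have qC : qform (C^T *m C) y = sqnorm (C *m y).
    by rewrite /sqnorm /qform mulmx1 trmx_mul !mulmxA.
  rewrite !qformD qC qform_conj => W0y.
  have := sqnorm_ge0 (C *m y); have := (posdef_psd Rpd).2 (K *m y); have := Dpsd.2 y.
  rewrite -!/(qform _ _) => Dy Ry Cy.
  split; first by apply/eqP; rewrite -sqnorm_eq0; apply/eqP; lra.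
  by apply: posdef_qform_eq0 Rpd _; lra.
apply: (observable_closed_loop (B := B) (K := K) a0 obs) => k kn;
  by have [] := W_eq0 _ (W0 k kn).
Qed.

End LinearQuadratic.

Section SingularValues.
Variable R : realType.
Local Open Scope classical_set_scope.

Lemma min_singular_value_sqr_le n (Y : 'M[R]_n) (u : 'cV[R]_n) :
  min_singular_value Y ^+ 2 * sqnorm u <= sqnorm (Y *m u).
Proof.
case: n Y u => [|n] Y u; first by rewrite [u]flatmx0 /sqnorm !qformv0 mulr0 mulmx0 qformv0.
set S := Y^T *m Y; set E := [set a : R | eigenvalue S a].
have qS y : qform S y = sqnorm (Y *m y) by rewrite /S /sqnorm /qform mulmx1 trmx_mul !mulmxA.
have ST : S^T = S by rewrite /S trmx_mul trmxK.
have [w w0 [lam [Sw lam_min]]] := rayleigh_eigenvector ST (posdef1 R n.+1).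
have E_ge0 : lbound E 0.
  move=> a /eigenvalueP [v vS v0].
  have v_gt0 : 0 < sqnorm v^T by rewrite sqnorm_gt0 // trmx_eq0.
  have Sv : qform S v^T = a * sqnorm v^T.
    by rewrite /sqnorm /qform trmxK vS mulmx1 -scalemxAl mxE.
  by rewrite -(pmulr_lge0 _ v_gt0) -Sv qS sqnorm_ge0.
have lamE : E lam.
  apply/eigenvalueP; exists w^T; last by rewrite trmx_eq0.
  by rewrite -{1}ST -trmx_mul Sw mul1mx linearZ.
have inf_le : inf E <= lam by apply: ge_inf; [exists 0 | ].
have inf_ge0 : 0 <= inf E by apply: lb_le_inf; [exists lam |].
rewrite /min_singular_value -/S -/E sqr_sqrtr // -qS.
by apply: le_trans (lam_min u); rewrite ler_wpM2r // sqnorm_ge0.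
Qed.

Lemma posdef_sub_scaled n (P Qc : 'M[R]_n) (c : R) :
  posdef P -> psd Qc -> Qc \in unitmx ->
  0 <= c -> c < Num.sqrt (min_singular_value (P *m invmx Qc)) -> posdef (P - c ^+ 2 *: Qc).
Proof.
case: n P Qc => [|n] P Qc Ppd Qpsd Qu c0 c_lt; first exact: posdef_mx0.
have Qpd := psd_unitmx_posdef Qpsd Qu.
have [x x0 [mu [Px mu_min]]] := rayleigh_eigenvector Ppd.1 Qpd.
have mu0 : 0 < mu.
  have := Ppd.2 x x0; rewrite -/(qform _ _).
  have -> : qform P x = mu * qform Qc x by rewrite /qform -mulmxA Px -scalemxAr mxE mulmxA.
  by rewrite pmulr_lgt0 //; apply: Qpd.2.
(* Qc x is an eigenvector of P Qc^-1 for the least generalized eigenvalue mu of (P, Qc). *)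
set u := Qc *m x; set sigma := min_singular_value _ in c_lt.
have u0 : u != 0 by apply: contra x0 => /eqP u0; rewrite -(mulKmx Qu x) -/u u0 mulmx0.
have Yu : P *m invmx Qc *m u = mu *: u by rewrite /u mulmxA -(mulmxA P) mulVmx // mulmx1 Px.
have sigma_le : sigma ^+ 2 <= mu ^+ 2.
  have := min_singular_value_sqr_le (P *m invmx Qc) u.
  by rewrite Yu /sqnorm qformvZ ler_pM2r // sqnorm_gt0.
have sigma0 : 0 <= sigma by apply: sqrtr_ge0.
have c2_lt : c ^+ 2 < sigma.
  by rewrite -(sqr_sqrtr sigma0); have := sqrtr_ge0 sigma; nra.
have sigma_mu : sigma <= mu by nra.
split=> [|z z0]; first by rewrite linearB linearZ /= Ppd.1 Qpsd.1.
rewrite -/(qform _ _) qformB qformZ; have := mu_min z; have := Qpd.2 z z0.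
rewrite -!/(qform _ _); nra.
Qed.

End SingularValues.

Section SpectralRadius.
Variable R : realType.
Local Notation C := R[i].
Local Open Scope classical_set_scope.

Lemma cmod_ge0 (z : C) : 0 <= cmod z.
Proof. exact: sqrtr_ge0. Qed.

Lemma cmodD (x y : C) : cmod (x + y) <= cmod x + cmod y.
Proof. by have := ler_normD x y; rewrite !normc_def -rmorphD lecR. Qed.

Lemma cmodM (x y : C) : cmod (x * y) = cmod x * cmod y.
Proof. by have := normrM x y; rewrite !normc_def -rmorphM => /complexI. Qed.

Lemma cmodR (x : R) : cmod x%:C%C = `|x|.
Proof. by rewrite /cmod /= expr0n /= addr0 sqrtr_sqr. Qed.

Definition cl1norm p q (M : 'M[C]_(p, q)) := \sum_i \sum_j cmod (M i j).

Lemma cl1norm_ge0 p q (M : 'M[C]_(p, q)) : 0 <= cl1norm M.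
Proof. by apply: sumr_ge0 => i _; apply: sumr_ge0 => j _; apply: cmod_ge0. Qed.

Lemma cl1normD p q (M N : 'M[C]_(p, q)) : cl1norm (M + N) <= cl1norm M + cl1norm N.
Proof.
rewrite /cl1norm -big_split ler_sum // => i _.
by rewrite -big_split ler_sum // => j _; rewrite mxE cmodD.
Qed.

Lemma cl1normZ p q (z : C) (M : 'M[C]_(p, q)) : cl1norm (z *: M) = cmod z * cl1norm M.
Proof.
rewrite /cl1norm mulr_sumr; apply: eq_bigr => i _.
by rewrite mulr_sumr; apply: eq_bigr => j _; rewrite mxE cmodM.
Qed.

Lemma cl1norm_map p q (M : 'M[R]_(p, q)) :
  cl1norm (map_mx (fun x : R => x%:C%C) M) = l1norm M.
Proof. by apply: eq_bigr => i _; apply: eq_bigr => j _; rewrite mxE cmodR. Qed.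

Lemma cvg0_contraction (a e : nat -> R) (r : R) : 0 <= r < 1 -> (forall k, 0 <= a k) ->
  (forall k, a k.+1 <= r * a k + e k) -> e @ \oo --> 0 -> a @ \oo --> 0.
Proof.
move=> /andP[r0 r1] a0 rec /cvgrPdist_le e0; apply/cvgrPdist_le => eps eps0.
have d0 : 0 < eps * (1 - r) / 2 by rewrite divr_gt0 // mulr_gt0 // subr_gt0.
have [N _ eN] := e0 _ d0.
have tail j : a (N + j)%N <= r ^+ j * a N + eps / 2.
  elim: j => [|j IH]; first by rewrite addn0 expr0 mul1r lerDl divr_ge0 // ltW.
  have := eN (N + j)%N (leq_addr _ _); rewrite /= sub0r normrN => /ler_normlW eNj.
  rewrite addnS exprS -mulrA; apply: le_trans (rec _) _.
  by move: (ler_wpM2l r0 IH); lra.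
have geo : geometric (a N) r @ \oo --> 0 by apply: cvg_geometric; rewrite ger0_norm.
have /cvgrPdist_le /(_ (eps / 2)) [|J _ gJ] := geo; first by rewrite divr_gt0.
exists (N + J)%N => // k /= NJk.
have Nk : (N <= k)%N := leq_trans (leq_addr J N) NJk.
have Jk : (J <= k - N)%N by rewrite leq_subRL.
have := gJ _ Jk; rewrite /= sub0r normrN mulrC => /ler_normlW gk.
have := tail (k - N)%N; rewrite subnKC // => ak.
by rewrite sub0r normrN ger0_norm //; lra.
Qed.

Lemma cvg0_annihilated n (G : 'M[C]_n.+1) (rs : seq C) (Y : 'M[C]_n.+1) :
  all (fun z => cmod z < 1) rs -> (\prod_(z <- rs) (G - z%:M)) *m Y = 0 ->
  (fun k => cl1norm (G ^+ k *m Y)) @ \oo --> 0.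
Proof.
elim/last_ind: rs Y => [|rs z IH] Y.
  move=> _; rewrite big_nil mul1mx => ->.
  rewrite (_ : (fun k => _) = fun=> 0); first exact: cvg_cst.
  apply: funext => k; rewrite mulmx0 /cl1norm big1 // => i _; rewrite big1 // => j _.
  by rewrite mxE -[0 : C]/((0 : R)%:C)%C cmodR normr0.
rewrite all_rcons => /andP[z1 rs1]; rewrite big_rcons /= -mulmxE -mulmxA.
move=> /(IH _ rs1) tail0; apply: (cvg0_contraction (r := cmod z) _ _ _ tail0) => [|k|k].
- by rewrite cmod_ge0 z1.
- exact: cl1norm_ge0.
- have -> : G ^+ k.+1 *m Y = z *: (G ^+ k *m Y) + G ^+ k *m ((G - z%:M) *m Y).
    rewrite mulmxBl mulmxBr mul_scalar_mx -scalemxAr mulmxA mulmxE -exprSr.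
    by rewrite addrC subrK.
  by apply: le_trans (cl1normD _ _) _; rewrite cl1normZ.
Qed.

Lemma cvg0_mxpow n (G : 'M[C]_n.+1) : (forall z, eigenvalue G z -> cmod z < 1) ->
  (fun k => cl1norm (G ^+ k)) @ \oo --> 0.
Proof.
move=> eigG; have [rs char_rs] := closed_field_poly_normal (char_poly G).
rewrite (monicP (char_poly_monic G)) scale1r in char_rs.
have rs1 : all (fun z => cmod z < 1) rs.
  by apply/allP => z zrs; apply: eigG; rewrite eigenvalue_root_char char_rs root_prod_XsubC.
have CH : (\prod_(z <- rs) (G - z%:M)) *m 1%:M = 0.
  rewrite mulmx1 -(Cayley_Hamilton G) char_rs rmorph_prod /=.
  by apply: eq_bigr => z _; rewrite rmorphB /= horner_mx_X horner_mx_C.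
rewrite (_ : (fun k => _) = fun k => cl1norm (G ^+ k *m 1%:M)); last first.
  by apply: funext => k; rewrite mulmx1.
exact: cvg0_annihilated rs1 CH.
Qed.

Lemma spectral_radius_ge0 n (F : 'M[R]_n) : 0 <= spectral_radius F.
Proof.
rewrite /spectral_radius; set S := [set r | _].
have [supS|/sup_out] := pselect (has_sup S); last by rewrite /S => ->.
have [_ [z [Fz _]]] := supS.1.
by apply: le_trans (cmod_ge0 z) (ub_le_sup supS.2 _); exists z.
Qed.

Lemma eigenvalue_cmod_le n (F : 'M[R]_n) (z : C) :
  eigenvalue (map_mx (fun x : R => x%:C%C) F) z -> cmod z <= spectral_radius F.
Proof.
move=> Fz; set Fc := map_mx _ F in Fz.
have [rs char_rs] := closed_field_poly_normal (char_poly Fc).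
rewrite (monicP (char_poly_monic Fc)) scale1r in char_rs.
apply: ub_le_sup; last by exists z.
exists (\sum_(w <- rs) cmod w) => _ [w [Fw ->]].
have wrs : w \in rs by rewrite -root_prod_XsubC -char_rs -eigenvalue_root_char.
by rewrite (big_rem _ wrs) /= lerDl sumr_ge0 // => *; apply: cmod_ge0.
Qed.

Lemma stein_cert_spectral n (F : 'M[R]_n) (b : R) : spectral_radius F < b ->
  exists2 N, (0 < N)%N & stein_cert 1%:M ((b^-1 *: F) ^+ N).
Proof.
move=> Fb; have b0 : 0 < b := le_lt_trans (spectral_radius_ge0 F) Fb.
case: n F Fb => [|n] F Fb.
  by exists 1%N => //; split; [apply: posdef1 | apply: posdef_mx0].
set Gc := map_mx (fun x : R => x%:C%C) (b^-1 *: F).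
have GcE : Gc = (b^-1)%:C%C *: map_mx (fun x : R => x%:C%C) F.
  by apply/matrixP => i j; rewrite !mxE rmorphM.
have eigG z : eigenvalue Gc z -> cmod z < 1.
  move=> /eigenvalueP [v vG v0]; rewrite GcE -scalemxAr in vG.
  have Fz : eigenvalue (map_mx (fun x : R => x%:C%C) F) (b%:C%C * z).
    apply/eigenvalueP; exists v => //.
    by rewrite -scalerA -vG scalerA -rmorphM /= mulfV ?gt_eqF // rmorph1 scale1r.
  have := le_lt_trans (eigenvalue_cmod_le Fz) Fb.
  by rewrite cmodM cmodR gtr0_norm // -[X in _ < X]mulr1 ltr_pM2l.
have /cvgrPdist_le /(_ (1 / 4)) [|N _ GN] := cvg0_mxpow eigG; first by rewrite divr_gt0.
exists N.+1 => //; apply: stein_cert_l1norm.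
have := GN N.+1 (leqnSn N); rewrite /= sub0r normrN ger0_norm ?cl1norm_ge0 //.
rewrite /Gc -rmorphXn cl1norm_map; lra.
Qed.

End SpectralRadius.

Section RiccatiIteration.
Variables (R : realType) (n m : nat) (A : 'M[R]_n) (B : 'M[R]_(n, m))
  (Q : 'M[R]_n) (Rw : 'M[R]_m) (sqrtQ : 'M[R]_n) (b : R)
  (K : nat -> 'M[R]_(m, n)) (P : nat -> 'M[R]_n) (c : nat -> R) (i : nat).
Hypotheses (Rpd : posdef Rw) (sqrtQ_psd : psd sqrtQ) (sqrtQ_sq : sqrtQ *m sqrtQ = Q)
  (obs : observable A sqrtQ) (c0 : c 0%N = 1)
  (sr_b : spectral_radius (A - B *m K 0%N) < b).
Hypothesis iteration : forall j, (j <= i)%N ->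
  lyap_eq A B Q Rw b c j (K j) (P j)
  /\ K j.+1 = next_gain A B Rw b c j (P j)
  /\ (let Qc := P j - Q - (K j.+1)^T *m Rw *m K j.+1 in
      if Qc \in unitmx then 1 < c j.+1 < Num.sqrt (min_singular_value (P j *m invmx Qc))
      else c j.+1 == 1).

Definition scale j := cprod c j / b ^+ 2.
Definition closed_loop j := Num.sqrt (scale j) *: (A - B *m K j).
Definition cost j := sqrtQ^T *m sqrtQ + (K j)^T *m Rw *m K j.

Lemma Q_gram : Q = sqrtQ^T *m sqrtQ.
Proof. by rewrite sqrtQ_psd.1. Qed.

Lemma b_gt0 : 0 < b.
Proof. exact: le_lt_trans (spectral_radius_ge0 _) sr_b. Qed.

Lemma scale_gt0 j : (j <= i.+1)%N -> 0 < scale j.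
Proof.
move=> ji; rewrite /scale divr_gt0 ?exprn_gt0 ?b_gt0 // prodr_gt0 // => -[[|k] kj] _ /=.
  by rewrite c0 expr1n.
rewrite exprn_gt0 //.
have [_ [_]] := iteration (leq_trans (kj : (k.+1 <= j)%N) ji).
by cbv zeta; case: ifP => [_ /andP[c1 _]|_ /eqP ->] //; apply: lt_trans c1.
Qed.

Lemma scaleS j : scale j.+1 = scale j * c j.+1 ^+ 2.
Proof. by rewrite /scale /cprod big_ord_recr mulrAC. Qed.

Lemma closed_loop_conj j X : (j <= i.+1)%N ->
  (closed_loop j)^T *m X *m closed_loop j =
    scale j *: ((A - B *m K j)^T *m X *m (A - B *m K j)).
Proof.
move=> ji; rewrite /closed_loop; set a := Num.sqrt _.
have -> : (a *: (A - B *m K j))^T = a *: (A - B *m K j)^T by rewrite linearZ.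
by rewrite -!scalemxAl -scalemxAr scalerA -expr2 sqr_sqrtr // ltW // scale_gt0.
Qed.

Lemma lyap_eq_stein j X : (j <= i.+1)%N ->
  lyap_eq A B Q Rw b c j (K j) X <-> stein (closed_loop j) X = cost j.
Proof.
move=> ji; rewrite /lyap_eq /stein /cost closed_loop_conj // -Q_gram -/(scale j).
by split=> /matrixP XE; apply/matrixP => p q; move: (XE p q); rewrite !mxE; lra.
Qed.

Lemma cost_psd j : psd (cost j).
Proof. exact: psdD (psd_gram _) (psd_conj _ (posdef_psd Rpd)). Qed.

Lemma cost_observable j : (j <= i.+1)%N -> qform_observable (closed_loop j) (cost j).
Proof.
move=> ji; rewrite /cost -[_ + _]addr0.
by apply: closed_loop_qform_observable (psd0 _ _); rewrite // gt_eqF // sqrtr_gt0 scale_gt0.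
Qed.

Lemma lyap_eq_unique_posdef j P0 N : (j <= i.+1)%N -> (0 < N)%N ->
  stein_cert P0 (closed_loop j ^+ N) ->
  exists X, [/\ posdef X, lyap_eq A B Q Rw b c j (K j) X &
                forall Y, lyap_eq A B Q Rw b c j (K j) Y -> Y = X].
Proof.
move=> ji N0 cert.
have [X [Xpd XW Xuniq]] := stein_cert_solution N0 cert (cost_psd j) (cost_observable ji).
exists X; split=> [//||Y /(lyap_eq_stein _ ji)]; last exact: Xuniq.
exact/(lyap_eq_stein _ ji).
Qed.

Lemma cert_base : exists2 N, (0 < N)%N & stein_cert 1%:M (closed_loop 0 ^+ N).
Proof.
have -> : closed_loop 0 = b^-1 *: (A - B *m K 0%N).
  rewrite /closed_loop /scale /cprod big_ord1 c0 expr1n mul1r -exprVn sqrtr_sqr.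
  by rewrite ger0_norm // invr_ge0 ltW // b_gt0.
exact: stein_cert_spectral sr_b.
Qed.

Lemma next_gain_normal j : (j <= i)%N -> posdef (P j) ->
  (scale j *: (B^T *m P j *m B) + Rw) *m K j.+1 = scale j *: (B^T *m P j *m A).
Proof.
move=> ji Ppd; have [_ [-> _]] := iteration ji; have s0 := scale_gt0 (leqW ji).
rewrite /next_gain (_ : b ^+ 2 / cprod c j = (scale j)^-1); last by rewrite invf_div.
set M := B^T *m P j *m B + _ *: Rw.
have Mpd : posdef M.
  by apply: posdefDl (psd_conj _ (posdef_psd Ppd)) (posdefZ _ Rpd); rewrite invr_gt0.
have -> : scale j *: (B^T *m P j *m B) + Rw = scale j *: M.
  by rewrite scalerDr scalerA mulfV ?gt_eqF // scale1r.
by rewrite -scalemxAl mulKVmx // posdef_unitmx.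
Qed.

Lemma stein_next_decomposition j : (j <= i)%N -> posdef (P j) ->
  exists2 D, psd D &
    psd (P j - Q - (K j.+1)^T *m Rw *m K j.+1) /\
    stein (closed_loop j.+1) (P j) =
      c j.+1 ^+ 2 *: D + (P j - c j.+1 ^+ 2 *: (P j - Q - (K j.+1)^T *m Rw *m K j.+1)).
Proof.
move=> ji Ppd; have [lyap_j _] := iteration ji.
have normal := next_gain_normal ji Ppd.
have square := completing_square (K j) Ppd.1 Rpd.1 normal.
have s0 : 0 < scale j := scale_gt0 (leqW ji).
move: lyap_j normal square; rewrite /lyap_eq -/(scale j).
set Pj := P j; set s := scale j; set K' := K j.+1; set cn := c j.+1.
set M := s *: (B^T *m Pj *m B) + Rw; set D := (K j - K')^T *m M *m (K j - K').
set Qc := Pj - Q - K'^T *m Rw *m K' => lyap_j normal square.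
have Mpd : posdef M := posdefDl (psdZ (ltW s0) (psd_conj B (posdef_psd Ppd))) Rpd.
have Dpsd : psd D := psd_conj _ (posdef_psd Mpd).
have QcE : Qc = s *: ((A - B *m K')^T *m Pj *m (A - B *m K')) + D.
  apply/matrixP => p q; move/matrixP: lyap_j => /(_ p q); move/matrixP: square => /(_ p q).
  by rewrite !mxE; lra.
exists D => //; split.
  by rewrite QcE; apply: psdD Dpsd; apply: psdZ (ltW s0) (psd_conj _ (posdef_psd Ppd)).
rewrite /stein closed_loop_conj // scaleS -/s -/K' -/cn QcE.
by apply/matrixP => p q; rewrite !mxE; ring.
Qed.

Lemma cert_step j : (j <= i)%N -> posdef (P j) ->
  stein_cert (P j) (closed_loop j.+1 ^+ n.+1).
Proof.
move=> ji Ppd; have [_ [_ c_next]] := iteration ji; cbv zeta in c_next.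
have [D Dpsd [Qc_psd steinE]] := stein_next_decomposition ji Ppd.
set W := stein (closed_loop j.+1) (P j) in steinE *.
suff [W_psd W_obs] : psd W /\ qform_observable (closed_loop j.+1) W.
  exact: stein_cert_observable.
case: ifP c_next => [Qc_unit /andP[c1 c_lt] | _ /eqP c1].
  have W_pd : posdef W.
    rewrite steinE; apply: posdefDl; first exact: psdZ (sqr_ge0 _) Dpsd.
    exact: posdef_sub_scaled Ppd Qc_psd Qc_unit (ltW (lt_trans ltr01 c1)) c_lt.
  by split; [exact: posdef_psd | exact: posdef_qform_observable].
have -> : W = cost j.+1 + D.
  rewrite steinE c1 expr1n !scale1r /cost -Q_gram.
  by apply/matrixP => p q; rewrite !mxE; lra.
split; first exact: psdD (cost_psd _) Dpsd.
apply: closed_loop_qform_observable obs Rpd Dpsd.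
by rewrite gt_eqF // sqrtr_gt0 scale_gt0.
Qed.

Lemma iterates_posdef j : (j <= i)%N -> posdef (P j).
Proof.
elim: j => [|j IH] ji.
  have [N N0 cert] := cert_base.
  have [X [Xpd _ Xuniq]] := lyap_eq_unique_posdef (leq0n _) N0 cert.
  by rewrite (Xuniq _ (iteration ji).1).
have cert := cert_step (ltnW ji) (IH (ltnW ji)).
have [X [Xpd _ Xuniq]] := lyap_eq_unique_posdef (leqW ji) (ltn0Sn n) cert.
by rewrite (Xuniq _ (iteration ji).1).
Qed.

Lemma next_lyap_eq_unique_posdef :
  exists X, [/\ posdef X, lyap_eq A B Q Rw b c i.+1 (K i.+1) X &
                forall Y, lyap_eq A B Q Rw b c i.+1 (K i.+1) Y -> Y = X].
Proof.
have cert := cert_step (leqnn i) (iterates_posdef (leqnn i)).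
exact: lyap_eq_unique_posdef (leqnn _) (ltn0Sn n) cert.
Qed.

End RiccatiIteration.

Unset Implicit Arguments.

Theorem theorem2 (R : realType) (n m : nat)
  (A : 'M[R]_n) (B : 'M[R]_(n, m)) (Q : 'M[R]_n) (Rw : 'M[R]_m) (sqrtQ : 'M[R]_n)
  (b : R) (K : nat -> 'M[R]_(m, n)) (P : nat -> 'M[R]_n) (c : nat -> R) :
  psd Q -> posdef Rw ->
  psd sqrtQ -> sqrtQ *m sqrtQ = Q ->
  controllable A B -> observable A sqrtQ ->
  c 0%N = 1 ->
  spectral_radius (A - B *m K 0%N) < b ->
  forall i : nat,
    (forall j : nat, (j <= i)%N ->
       lyap_eq A B Q Rw b c j (K j) (P j)
       /\ K j.+1 = next_gain A B Rw b c j (P j)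
       /\ (let Qc := P j - Q - (K j.+1)^T *m Rw *m K j.+1 in
           if Qc \in unitmx then
             1 < c j.+1 < Num.sqrt (min_singular_value (P j *m invmx Qc))
           else c j.+1 == 1)) ->
    exists X : 'M[R]_n,
      (posdef X /\ lyap_eq A B Q Rw b c i.+1 (K i.+1) X)
      /\ forall Y : 'M[R]_n, posdef Y -> lyap_eq A B Q Rw b c i.+1 (K i.+1) Y -> Y = X.
Proof.
move=> _ Rpd sqrtQ_psd sqrtQ_sq _ obs c0 sr_b i iteration.
have [X [Xpd XL Xuniq]] :=
  next_lyap_eq_unique_posdef Rpd sqrtQ_psd sqrtQ_sq obs c0 sr_b iteration.
by exists X; split=> // Y _; apply: Xuniq.
Qed.
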